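(* Let $G$ be a simple graph having two edges with no common end. Then $(\lambda-1)^2$ divides $P(\mathcal{H}_{\bullet G},\lambda)$.
   Context: A hypergraph $\mathcal{H}=(\mathcal{V},\mathcal{E})$ consists of a finite vertex set $\mathcal{V}$ and a set $\mathcal{E}$ of subsets of $\mathcal{V}$, each of size at least $1$, called edges. For a positive integer $\lambda$, a weak proper $\lambda$-colouring of $\mathcal{H}$ is a map $\phi:\mathcal{V}\to\{1,\dots,\lambda\}$ such that $|\{\phi(v):v\in e\}|>1$ for every $e\in\mathcal{E}$. $P(\mathcal{H},\lambda)$ denotes the number of weak proper $\lambda$-colourings; it is a polynomial in $\lambda$. For a simple graph $G=(V,E)$, $\mathcal{H}_{\bullet G}$ is the hypergraph with vertex set $V\cup\{w\}$, $w\notin V$ a new vertex, and edge set $\{\{u,v,w\}:uv\in E\}$. *)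

From HB Require Import structures.
From mathcomp Require Import all_boot all_order all_algebra.
Set Implicit Arguments. Unset Strict Implicit. Unset Printing Implicit Defensive.
Import GRing.Theory Num.Theory.

Definition hyp_edges_ok (T : finType) (E : {set {set T}}) : bool :=
  [forall e in E, e != set0].

Definition weak_proper (T : finType) (E : {set {set T}}) (lam : nat)
  (phi : {ffun T -> 'I_lam}) : bool :=
  [forall e in E, 1 < #|[set phi v | v in e]|].

Definition num_weak_colourings (T : finType) (E : {set {set T}}) (lam : nat) : nat :=
  #|[set phi : {ffun T -> 'I_lam} | @weak_proper T E lam phi]|.

(* p is the chromatic polynomial P(H, .) : it agrees with the counting function
   at every positive integer (this determines p uniquely). *)
Definition is_chrom_poly (T : finType) (E : {set {set T}}) (p : {poly rat}) : Prop :=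
  forall lam : nat, (0 < lam)%N -> (p.[lam%:R] = (num_weak_colourings E lam)%:R)%R.

Definition simple_graph (V : finType) (adj : rel V) : Prop :=
  symmetric adj /\ irreflexive adj.

(* The hypergraph H_{.G}: vertex set option V (None is the new vertex w),
   edges {u, v, w} for each edge uv of G. *)
Definition bullet_edges (V : finType) (adj : rel V) : {set {set option V}} :=
  [set [set Some x.1; Some x.2; None] | x in [set x : V * V | adj x.1 x.2]].

From HB Require Import structures.
From mathcomp Require Import all_boot all_order all_algebra.
Import GRing.Theory Num.Theory.
Set Implicit Arguments. Unset Strict Implicit.

(* A colouring of H_{.G} is weakly proper iff the vertices of G sharing the
   colour of w form an independent set S.  Given S and the colour of w, each
   vertex outside S has lam - 1 admissible colours, so
   P(lam) = lam * \sum_(S independent) (lam - 1)^|V \ S|.  Two disjoint edges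
   each leave a vertex outside any independent S, so every exponent is >= 2. *)

Lemma card_set3_gt1 (T : finType) (a b c : T) :
  (1 < #|[set a; b; c]|) = (a != c) || (b != c).
Proof.
have [->|ac] := eqVneq a c; have [->|bc] := eqVneq b c;
  rewrite ?setUid ?cards1 //=; apply/card_gt1P;
  [exists b, c | exists a, c | exists a, c]; by rewrite !inE !eqxx !orbT.
Qed.

Section BulletHypergraph.

Variables (V : finType) (adj : rel V).

Definition independent (S : {set V}) : bool :=
  [forall x in S, forall y in S, ~~ adj x y].

Definition colour_class_of_w lam (phi : {ffun option V -> 'I_lam}) : {set V} :=
  [set v | phi (Some v) == phi None].

Lemma weak_proper_bulletE lam (phi : {ffun option V -> 'I_lam}) :
  weak_proper (bullet_edges adj) phi = independent (colour_class_of_w phi).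
Proof.
have edgeE x y :
    (1 < #|[set phi v | v in [set Some x; Some y; None]]|) =
    ~~ ((x \in colour_class_of_w phi) && (y \in colour_class_of_w phi)).
  by rewrite !imsetU !imset_set1 card_set3_gt1 !inE negb_and.
apply/forallP/forall_inP => [proper x Sx|indep e].
- apply/forall_inP => y Sy; apply: contraTN Sy => xy.
  have /implyP := proper [set Some x; Some y; None].
  rewrite edgeE Sx; apply.
  by apply/imsetP; exists (x, y); rewrite ?inE.
- apply/implyP => /imsetP [[x y]]; rewrite inE /= => xy ->.
  rewrite edgeE; apply/negP => /andP [Sx Sy].
  by have /forall_inP/(_ y Sy) := indep x Sx; rewrite xy.
Qed.

Lemma card_colourings_with_class lam (c : 'I_lam) (S : {set V}) :
  #|[set phi : {ffun option V -> 'I_lam} |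
       (phi None == c) && (colour_class_of_w phi == S)]| = lam.-1 ^ #|~: S|.
Proof.
pose allowed (x : option V) : pred 'I_lam :=
  if x is Some v then (if v \in S then pred1 c else predC1 c) else pred1 c.
transitivity #|(family allowed : simpl_pred {ffun option V -> 'I_lam})|.
  apply: eq_card => phi; rewrite inE; apply/andP/familyP => [[/eqP c_w /eqP S_phi]|].
  - move: S_phi; rewrite /allowed => <- [v|] /=; last by rewrite inE c_w.
    by rewrite inE c_w; case: eqP => [->|/eqP]; rewrite inE.
  - move=> allowed_phi; have c_w : phi None = c by have /eqP := allowed_phi None.
    split; first by rewrite c_w.
    apply/eqP/setP => v; rewrite inE c_w; have := allowed_phi (Some v) => /=.
    by case: (v \in S); rewrite inE // => /negbTE.
rewrite card_family foldrE big_image /=.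
rewrite (eq_bigr (fun x => if x \in Some @: ~: S then lam.-1 else 1)) => [|[v|] _].
- by rewrite -big_mkcond prod_nat_const card_imset //; exact: Some_inj.
- rewrite (mem_imset _ _ Some_inj) inE /=.
  by case: (v \in S); rewrite /= ?card1 // cardC1 card_ord.
- by rewrite card1; case: imsetP => // -[].
Qed.

Lemma num_weak_colourings_bullet lam :
  num_weak_colourings (bullet_edges adj) lam =
  lam * \sum_(S : {set V} | independent S) lam.-1 ^ #|~: S|.
Proof.
rewrite /num_weak_colourings -sum1_card.
pose split_colouring (phi : {ffun option V -> 'I_lam}) :=
  (phi None, colour_class_of_w phi).
rewrite (partition_big split_colouring (fun j => independent j.2)) => [|phi];
  last by rewrite inE weak_proper_bulletE.
transitivity (\sum_(j : 'I_lam * {set V} | independent j.2) lam.-1 ^ #|~: j.2|).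
  apply: eq_bigr => -[c S] /= indepS.
  rewrite -(card_colourings_with_class c S) -sum1_card; apply: eq_bigl => phi.
  rewrite !inE weak_proper_bulletE xpair_eqE.
  by case: (colour_class_of_w phi =P S) => [-> | _]; rewrite ?andbF // indepS.
rewrite -(pair_big_dep xpredT (fun _ => independent) (fun _ S => lam.-1 ^ #|~: S|)).
by rewrite sum_nat_const card_ord.
Qed.

Lemma card_compl_independent_ge2 (a b c d : V) (S : {set V}) :
  adj a b -> adj c d -> [&& a != c, a != d, b != c & b != d] ->
  independent S -> 1 < #|~: S|.
Proof.
move=> ab cd /and4P [ac ad bc bd] indepS.
have outside x y : adj x y -> exists2 z, (z == x) || (z == y) & z \in ~: S.
  move=> xy; have [Sx|notSx] := boolP (x \in S); last by exists x; rewrite ?eqxx ?inE.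
  exists y; rewrite ?eqxx ?orbT // inE; apply: contraTN xy => Sy.
  by have /forall_inP/(_ y Sy) := forall_inP indepS x Sx.
have [x xab x_out] := outside _ _ ab; have [y ycd y_out] := outside _ _ cd.
apply/card_gt1P; exists x, y; split=> //.
by case/orP: xab => /eqP ->; case/orP: ycd => /eqP ->.
Qed.

End BulletHypergraph.

Theorem mainTheorem18 (V : finType) (adj : rel V) :
  simple_graph adj ->
  (exists a b c d : V,
      [/\ adj a b, adj c d & [&& a != c, a != d, b != c & b != d]]) ->
  exists p : {poly rat},
    is_chrom_poly (bullet_edges adj) p /\
    ((('X - 1) ^+ 2 : {poly rat}) %| p)%R.
Proof.
move=> _ [a [b [c [d [ab cd disjoint]]]]].
exists ('X * \sum_(S : {set V} | independent adj S) ('X - 1) ^+ #|~: S|)%R; split.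
- move=> lam lam_gt0; rewrite num_weak_colourings_bullet natrM natr_sum.
  rewrite hornerM hornerX horner_sum; congr (_ * _)%R; apply: eq_bigr => S _.
  by rewrite horner_exp hornerD hornerN hornerX hornerC natrX -subn1 natrB.
- apply: dvdp_mull; elim/big_rec: _ => [|S q indepS q_div]; first exact: dvdp0.
  rewrite dvdp_add // dvdp_exp2l //.
  exact: card_compl_independent_ge2 ab cd disjoint indepS.
Qed.
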